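(* Let $\mathbf{P}$ be a probability distribution on $\mathbb{R}^D$ whose samples lie in a bounded box $\prod_{d=1}^D[\lambda,\mu]$, and let $U>0$. Fix $0<a<b$ and a latent dimension $K$, and let $\mathcal{C}^\dagger_{\mathbf{P},\frac12 U}$ be the set of Spectrum VAEs $(\phi,\theta)$ (with these $a,b,K$) that are essentially compatible with $\mathbf{P}$ given $\frac12 U$. Define $$\mathrm{MDL}^\dagger_U=\inf_{(\phi,\theta)\in\mathcal{C}^\dagger_{\mathbf{P},\frac12U}}\log_2\Big(\sum_{m=1}^M|\mathcal{P}_m|_{\frac12U}\Big),$$ where, for each $(\phi,\theta)$, $\mathcal{P}_1,\dots,\mathcal{P}_M$ are all the spiking patterns of spectra $\phi(\mathbf{x})$ with $\mathbf{x}$ drawn from $\mathbf{P}$, and $|\mathcal{P}_m|_{\frac12U}$ is the $\frac12U$-complexity of $\mathcal{P}_m$ with respect to $\theta$. Then a Spectrum VAE $(\phi^\dagger,\theta^\dagger)\in\mathcal{C}^\dagger_{\mathbf{P},\frac12U}$ achieves $\mathrm{MDL}^\dagger_U$ (i.e. its value $\log_2(\sum_m|\mathcal{P}_m|_{\frac12U})$ equals $\mathrm{MDL}^\dagger_U$) if and only if the sum of its $U$-residual and its $U$-redundancy is the minimum among all Spectrum VAEs in $\mathcal{C}^\dagger_{\mathbf{P},\frac12U}$.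
   Context: Spectrum VAE: given $0<a<b$, an encoder $\phi:\mathbb{R}^D\to\mathbb{R}^K$ first computes $\mathbf{z}_{\mathrm{pre}}\in\mathbb{R}^K$ and then sets, coordinatewise, $z_k=z_{\mathrm{pre},k}$ if $a\le z_{\mathrm{pre},k}\le b$, $z_k=b$ if $z_{\mathrm{pre},k}>b$, and $z_k=0$ if $z_{\mathrm{pre},k}<a$; the output $\mathbf{z}=\phi(\mathbf{x})$ is called a spectrum. A decoder $\theta:\mathbb{R}^K\to\mathbb{R}^D$ produces $\tilde{\mathbf{x}}=\theta(\mathbf{z})$; distances are Euclidean. The spiking pattern of a spectrum $\mathbf{z}$ is $\{k: z_k\ge a\}$ ($\emptyset$ if $\mathbf{z}=0$). Patterns and robustness: for a pattern $\mathcal{P}=\{k_1,\dots,k_L\}$, a spectrum preserved by $\mathcal{P}$ is any $\mathbf{z}$ with $z_{k_l}\in[a,b]$ and all other coordinates zero. Given $\alpha_{k_l}>0$ and $\epsilon_{k_l}\in[-\alpha_{k_l},\alpha_{k_l}]$, the perturbed spectrum $\tilde{\mathbf{z}}$ has $\tilde z_{k_l}=\min(b,\max(a,z_{k_l}+\epsilon_{k_l}))$, zero elsewhere. $\theta$ is $U'$-robust w.r.t. $\mathcal{P}$ with ($U'$-qualified) boundaries $\{\alpha_{k_l}\}$ if $\|\theta(\mathbf{z})-\theta(\tilde{\mathbf{z}})\|_2\le U'$ for all spectra $\mathbf{z}$ preserved by $\mathcal{P}$ and all such perturbations. For such boundaries, let $Q_{k_l}$ be the smallest integer larger than $(b-a)/(2\alpha_{k_l})$,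 split $[a,b]$ in coordinate $k_l$ into $Q_{k_l}$ equal pieces with midpoints as quantization scales; the representation set consists of the $\prod_l Q_{k_l}$ spectra preserved by $\mathcal{P}$ with quantization-scale coordinates (size $1$ if $\mathcal{P}=\emptyset$). A spectrum preserved by $\mathcal{P}$ is quantized to the element of this set obtained by rounding each $z_{k_l}$ to the nearest scale. The $U'$-optimal representation set $\mathcal{R}^*_{\mathcal{P}}$ is a representation set of minimum size over all $U'$-qualified boundaries, and the $U'$-complexity $|\mathcal{P}|_{U'}$ is its size ($\infty$ if no qualified boundaries exist). Essential compatibility: $(\phi,\theta)$ is essentially compatible with $\mathbf{P}$ given $U'$ if $\|\mathbf{x}-\theta(\phi(\mathbf{x}))\|_2\le U'$ for every sample $\mathbf{x}$ drawn from $\mathbf{P}$. $U$-essence: $\mathcal{E}_{\mathbf{P},U}$ is the minimum cardinality of a finite set $S\subset\mathbb{R}^D$ such that every sample $\mathbf{x}$ of $\mathbf{P}$ is within distance $U$ of some point of $S$. Residual and redundancy: for $(\phi,\theta)\in\mathcal{C}^\dagger_{\mathbf{P},\frac12U}$ with spiking patterns $\mathcal{P}_1,\dots,\mathcal{P}_M$ and $\frac12U$-optimal representation sets $\mathcal{R}^*_{\mathcal{P}_m}$, a quantized spectrum $\hat{\mathbf{z}}\in\mathcal{R}^*_{\mathcal{P}_m}$ is essentially valuable if some sample $\mathbf{x}$ of $\mathbf{P}$ has $\phi(\mathbf{x})$ quantized to $\hat{\mathbf{z}}$; the $\frac12U$-essential complexity $|\mathcal{P}_m|^\dagger_{\frac12U}$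 is the number of essentially valuable elements of $\mathcal{R}^*_{\mathcal{P}_m}$. The $U$-residual is $\sum_m|\mathcal{P}_m|_{\frac12U}-\sum_m|\mathcal{P}_m|^\dagger_{\frac12U}$ and the $U$-redundancy is $\sum_m|\mathcal{P}_m|^\dagger_{\frac12U}-\mathcal{E}_{\mathbf{P},U}$. *)

From HB Require Import structures.
From mathcomp Require Import all_boot all_order all_algebra.
From mathcomp Require Import all_classical all_reals all_analysis.
From mathcomp Require Import finmap.
Set Implicit Arguments. Unset Strict Implicit. Unset Printing Implicit Defensive.
Import Order.TTheory GRing.Theory Num.Theory.
Local Open Scope classical_set_scope.
Local Open Scope ring_scope.

(* Data space R^D: row vectors, with a pointed instance (needed to build
   the generated sigma-algebra). *)
Definition rvec (R : realType) n := 'rV[R]_n.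
HB.instance Definition _ (R : realType) n := Choice.on (rvec R n).
HB.instance Definition _ (R : realType) n := isPointed.Build (rvec R n) 0%R.

Section SpectrumVAE.
Variable R : realType.

Definition edist n (x y : 'rV[R]_n) : R :=
  Num.sqrt (\sum_(i < n) (x ord0 i - y ord0 i) ^+ 2).

Definition eball n (x : rvec R n) (e : R) : set (rvec R n) :=
  [set y | edist x y < e].
Definition eopen n (A : set (rvec R n)) : Prop :=
  forall x, A x -> exists2 e : R, 0 < e & eball x e `<=` A.
Definition borelRV n : measurableType (sigma_display (@eopen n)) :=
  g_sigma_algebraType (@eopen n).

(* The samples of P: the points of its (topological) support. *)
Definition samples n (P : probability (borelRV n) R) : set (rvec R n) :=
  [set x | forall e : R, 0 < e -> (0 < P (eball x e))%E].

Variables (a b : R).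

Definition clip (t : R) : R := if t < a then 0 else if b < t then b else t.

(* Spectrum VAE encoder phi = clipping of an arbitrary pre-encoder *)
Definition spec_enc D K (phipre : rvec R D -> 'rV[R]_K) (x : rvec R D)
  : 'rV[R]_K := \row_k clip (phipre x ord0 k).

Definition spiking K (z : 'rV[R]_K) : {set 'I_K} := [set k | a <= z ord0 k].

Definition preserved K (Pt : {set 'I_K}) (z : 'rV[R]_K) : Prop :=
  (forall k, k \in Pt -> a <= z ord0 k <= b) /\
  (forall k, k \notin Pt -> z ord0 k = 0).

Definition perturb K (Pt : {set 'I_K}) (z eps : 'rV[R]_K) : 'rV[R]_K :=
  \row_k (if k \in Pt then Num.min b (Num.max a (z ord0 k + eps ord0 k)) else 0).

Definition qualified D K (theta : 'rV[R]_K -> rvec R D) (U' : R)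
  (Pt : {set 'I_K}) (alpha : 'rV[R]_K) : Prop :=
  (forall k, k \in Pt -> 0 < alpha ord0 k) /\
  forall z eps : 'rV[R]_K, preserved Pt z ->
    (forall k, k \in Pt -> `|eps ord0 k| <= alpha ord0 k) ->
    edist (theta z) (theta (perturb Pt z eps)) <= U'.

Definition Qn (al : R) : nat := (Num.truncn ((b - a) / (2 * al))).+1.

(* the quantization scales of coordinate k: midpoints of the Q_k pieces *)
Definition scale (q j : nat) : R := a + (b - a) * (2 * j%:R + 1) / (2 * q%:R).

Definition repset K (Pt : {set 'I_K}) (alpha : 'rV[R]_K) : set 'rV[R]_K :=
  [set z | preserved Pt z /\ forall k, k \in Pt ->
      exists2 j, (j < Qn (alpha ord0 k))%N & z ord0 k = scale (Qn (alpha ord0 k)) j].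

Definition repsize K (Pt : {set 'I_K}) (alpha : 'rV[R]_K) : nat :=
  (\prod_(k in Pt) Qn (alpha ord0 k))%N.

(* U'-complexity |Pt|_{U'}: minimal size over qualified boundaries,
   +oo if there are none (inf of the empty set). *)
Definition complexity D K (theta : 'rV[R]_K -> rvec R D) (U' : R)
  (Pt : {set 'I_K}) : \bar R :=
  ereal_inf [set (n%:R)%:E | n in
     [set n | exists2 alpha, qualified theta U' Pt alpha & n = repsize Pt alpha]].

(* a choice of U'-optimal boundaries (defining the U'-optimal
   representation set R*_Pt = repset Pt (optbound ..)) *)
Definition optbound D K (theta : 'rV[R]_K -> rvec R D) (U' : R)
  (Pt : {set 'I_K}) : 'rV[R]_K :=
  xget (const_mx 1) [set alpha | qualified theta U' Pt alpha /\
                     ((repsize Pt alpha)%:R)%:E = complexity theta U' Pt].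

Definition quantized_to K (Pt : {set 'I_K}) (alpha z zh : 'rV[R]_K) : Prop :=
  preserved Pt z /\ repset Pt alpha zh /\
  forall k, k \in Pt -> forall j, (j < Qn (alpha ord0 k))%N ->
    `|z ord0 k - zh ord0 k| <= `|z ord0 k - scale (Qn (alpha ord0 k)) j|.

Definition patterns D K (P : probability (borelRV D) R)
  (phipre : rvec R D -> 'rV[R]_K) : {set {set 'I_K}} :=
  [set Pt | `[< exists2 x, samples P x & spiking (spec_enc phipre x) = Pt >]].

Definition compatible D K (P : probability (borelRV D) R) (U' : R)
  (phipre : rvec R D -> 'rV[R]_K) (theta : 'rV[R]_K -> rvec R D) : Prop :=
  forall x, samples P x -> edist x (theta (spec_enc phipre x)) <= U'.

Definition ess_complexity D K (P : probability (borelRV D) R) (U' : R)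
  (phipre : rvec R D -> 'rV[R]_K) (theta : 'rV[R]_K -> rvec R D)
  (Pt : {set 'I_K}) : nat :=
  let al := optbound theta U' Pt in
  (#|` fset_set [set zh | repset Pt al zh /\
       exists2 x, samples P x & quantized_to Pt al (spec_enc phipre x) zh] |)%fset.

Definition essence D (P : probability (borelRV D) R) (U : R) : nat :=
  xget 0%N [set n | (exists S : {fset rvec R D}, (#|` S|)%fset = n /\
                       forall x, samples P x -> exists2 s, s \in S & edist x s <= U) /\
                    forall S : {fset rvec R D},
                       (forall x, samples P x -> exists2 s, s \in S & edist x s <= U) ->
                       (n <= (#|` S|)%fset)%N].

Definition sum_complexity D K (P : probability (borelRV D) R) (U : R)
  (phipre : rvec R D -> 'rV[R]_K) (theta : 'rV[R]_K -> rvec R D) : \bar R :=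
  (\sum_(Pt in patterns P phipre) complexity theta (U / 2) Pt)%E.

Definition sum_ess_complexity D K (P : probability (borelRV D) R) (U : R)
  (phipre : rvec R D -> 'rV[R]_K) (theta : 'rV[R]_K -> rvec R D) : nat :=
  (\sum_(Pt in patterns P phipre) ess_complexity P (U / 2) phipre theta Pt)%N.

Definition residual D K (P : probability (borelRV D) R) (U : R)
  (phipre : rvec R D -> 'rV[R]_K) (theta : 'rV[R]_K -> rvec R D) : \bar R :=
  (sum_complexity P U phipre theta - ((sum_ess_complexity P U phipre theta)%:R)%:E)%E.

Definition redundancy D K (P : probability (borelRV D) R) (U : R)
  (phipre : rvec R D -> 'rV[R]_K) (theta : 'rV[R]_K -> rvec R D) : \bar R :=
  ((sum_ess_complexity P U phipre theta)%:R - (essence P U)%:R)%:E.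

Definition elog2 (x : \bar R) : \bar R :=
  match x with
  | EFin r => (ln r / ln 2)%:E
  | +oo%E => +oo%E
  | -oo%E => -oo%E
  end.

Definition MDL D K (P : probability (borelRV D) R) (U : R) : \bar R :=
  ereal_inf [set elog2 (sum_complexity P U (fst v) (snd v)) | v in
     [set v : (rvec R D -> 'rV[R]_K) * ('rV[R]_K -> rvec R D) |
        compatible P (U / 2) v.1 v.2]].

End SpectrumVAE.

(* Residual plus redundancy telescopes to [sum_m |P_m|_{U/2} - E_{P,U}], and the
   essence [E_{P,U}] does not depend on the VAE, so minimizing residual plus
   redundancy is minimizing [sum_m |P_m|_{U/2}].  Every complexity is at least 1,
   so this sum is 0 for all VAEs when P has no samples and at least 1 for all of
   them otherwise; on either range [log_2] preserves the order, hence these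
   minimizers are exactly the VAEs attaining the MDL infimum. *)
From HB Require Import structures.
From mathcomp Require Import all_boot all_order all_algebra.
From mathcomp Require Import all_classical all_reals all_analysis.
Import Order.TTheory GRing.Theory Num.Theory.
Local Open Scope classical_set_scope.
Local Open Scope ring_scope.

(* The case [x = y = 0] is needed separately: the junk value [ln 0 = 0] gives
   [elog2 0 = elog2 1]. *)
Lemma lee_elog2 (R : realType) (x y : \bar R) :
  (x = 0 /\ y = 0)%E \/ (0 < x /\ 0 < y)%E ->
  (elog2 x <= elog2 y)%E = (x <= y)%E.
Proof.
case=> [[-> ->] | []]; first by rewrite !lexx.
have ln2_gt0 : 0 < ln (2 : R) by apply: ln_gt0; rewrite ltr1n.
case: x => [r| |] //; case: y => [s| |] //= r_gt0 s_gt0.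
- by rewrite !lee_fin ler_pM2r ?invr_gt0 // ler_ln.
- by rewrite !leey.
Qed.

Lemma ereal_inf_image_minP (R : realType) (T : Type) (S : set T)
    (f : T -> \bar R) (s : T) :
  S s -> f s = ereal_inf (f @` S) <-> (forall t, S t -> (f s <= f t)%E).
Proof.
move=> Ss; split=> [-> t St | fs_min].
  by apply: ereal_inf_lbound; exists t.
apply/eqP; rewrite eq_le; apply/andP; split.
  by apply: le_ereal_inf_tmp => _ [t St <-]; exact: fs_min.
by apply: ereal_inf_lbound; exists s.
Qed.

Section SumComplexity.
Variables (R : realType) (a b U : R) (D K : nat).
Variable P : probability (borelRV R D) R.
Implicit Types (phipre : rvec R D -> 'rV[R]_K) (theta : 'rV[R]_K -> rvec R D).

Lemma complexity_ge1 theta U' Pt : (1%:E <= complexity a b theta U' Pt)%E.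
Proof.
apply: le_ereal_inf_tmp => _ [n [alpha _ ->] <-].
by rewrite lee_fin ler1n; apply: prodn_gt0.
Qed.

Lemma sum_complexity_ge0 phipre theta :
  (0 <= sum_complexity a b P U phipre theta)%E.
Proof.
apply: sume_ge0 => Pt _.
by apply: le_trans (complexity_ge1 _ _ _); rewrite lee_fin.
Qed.

Lemma sum_complexity_ge1 phipre theta x :
  samples P x -> (1%:E <= sum_complexity a b P U phipre theta)%E.
Proof.
move=> Sx; have Pt_x : spiking a (spec_enc a b phipre x) \in patterns a b P phipre.
  by rewrite inE; apply/asboolP; exists x.
rewrite /sum_complexity (bigD1 _ Pt_x) /= -[leLHS]adde0.
apply: leeD; first exact: complexity_ge1.
by apply: sume_ge0 => Pt _; apply: le_trans (complexity_ge1 _ _ _); rewrite lee_fin.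
Qed.

Lemma sum_complexity_eq0 phipre theta :
  samples P = set0 -> sum_complexity a b P U phipre theta = 0%E.
Proof.
move=> S0; rewrite /sum_complexity big_pred0 // => Pt.
by rewrite inE; apply/asboolP => -[x]; rewrite S0.
Qed.

Lemma residual_redundancyE phipre theta :
  (residual a b P U phipre theta + redundancy a b P U phipre theta =
   sum_complexity a b P U phipre theta - ((essence P U)%:R)%:E)%E.
Proof.
rewrite /residual /redundancy.
move: (sum_complexity_ge0 phipre theta).
case: (sum_complexity a b P U phipre theta) => [r| |] //= _.
by rewrite -EFinD; congr EFin; rewrite addrA subrK.
Qed.


Lemma le_residual_redundancy phipre theta phipre' theta' :
  (residual a b P U phipre theta + redundancy a b P U phipre theta <=
   residual a b P U phipre' theta' + redundancy a b P U phipre' theta')%E =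
  (sum_complexity a b P U phipre theta <= sum_complexity a b P U phipre' theta')%E.
Proof.
(* An unrestricted rewrite would try to unify the two sides by unfolding. *)
by rewrite [leLHS]residual_redundancyE [leRHS]residual_redundancyE leeD2rE.
Qed.

Lemma le_elog2_sum_complexity phipre theta phipre' theta' :
  (elog2 (sum_complexity a b P U phipre theta) <=
   elog2 (sum_complexity a b P U phipre' theta'))%E =
  (sum_complexity a b P U phipre theta <= sum_complexity a b P U phipre' theta')%E.
Proof.
apply: lee_elog2.
have [[x Sx] | no_samples] := pselect (exists x, samples P x).
  by right; split; apply: (lt_le_trans _ (sum_complexity_ge1 _ _ _ Sx)); rewrite lte_fin.
have S0 : samples P = set0 by apply/seteqP; split=> // x Sx; apply: no_samples; exists x.
by left; split; apply: sum_complexity_eq0.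
Qed.

End SumComplexity.

Theorem theorem2 (R : realType) (D K : nat) (P : probability (borelRV R D) R)
  (lam mu : R)
  (Hbox : forall x, samples P x -> forall d : 'I_D, lam <= x ord0 d <= mu)
  (U a b : R) (HU : 0 < U) (Ha : 0 < a) (Hab : a < b)
  (phipre : rvec R D -> 'rV[R]_K) (theta : 'rV[R]_K -> rvec R D)
  (Hcomp : compatible a b P (U / 2) phipre theta) :
  elog2 (sum_complexity a b P U phipre theta) = MDL a b K P U <->
  (forall (phipre' : rvec R D -> 'rV[R]_K) (theta' : 'rV[R]_K -> rvec R D),
     compatible a b P (U / 2) phipre' theta' ->
     (residual a b P U phipre theta + redundancy a b P U phipre theta <=
      residual a b P U phipre' theta' + redundancy a b P U phipre' theta')%E).
Proof.
have mdl_minP := @ereal_inf_image_minP R _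
  [set v | compatible a b P (U / 2) v.1 v.2]
  (fun v => elog2 (sum_complexity a b P U v.1 v.2)) (phipre, theta) Hcomp.
split=> [/mdl_minP mdl_min phipre' theta' comp' | rr_min].
  by rewrite le_residual_redundancy -le_elog2_sum_complexity; exact: (mdl_min (_, _)).
apply/mdl_minP => -[phipre' theta'] comp' /=.
by rewrite le_elog2_sum_complexity -le_residual_redundancy; exact: rr_min.
Qed.
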